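(* Let $\Sigma\in\mathbb{R}^{N\times N}$ be symmetric positive definite, $\mu\in\mathbb{R}^N$, $\gamma\in[0,1]$, and let $L,R\subseteq\{1,\dots,N\}$ be disjoint nonempty index sets. For representatives $\hat w_L\in\mathbb{R}^{|L|}$, $\hat w_R\in\mathbb{R}^{|R|}$ define $v_L=\hat w_L^\top\Sigma_{LL}\hat w_L$, $s_L=\hat w_L^\top\mu_L$, $v_R=\hat w_R^\top\Sigma_{RR}\hat w_R$, $s_R=\hat w_R^\top\mu_R$, $c=\hat w_L^\top\Sigma_{LR}\hat w_R$, \[ \alpha_L^{\mathrm{raw}}=\frac{v_Rs_L-\gamma cs_R}{v_Lv_R-\gamma^2c^2},\qquad \alpha_R^{\mathrm{raw}}=\frac{v_Ls_R-\gamma cs_L}{v_Lv_R-\gamma^2c^2}, \] $\alpha_k=\alpha_k^{\mathrm{raw}}/(|\alpha_L^{\mathrm{raw}}|+|\alpha_R^{\mathrm{raw}}|)$ for $k\in\{L,R\}$, and the combined node portfolio $(\alpha_L\hat w_L,\alpha_R\hat w_R)\in\mathbb{R}^{L\cup R}$. Fix $\hat w_R$ and let $k>0$. Then the combined node portfolio obtained from $(k\hat w_L,\hat w_R)$ lies on the same ray as the one obtained from $(\hat w_L,\hat w_R)$, i.e.\ it equals it multiplied by a strictly positive scalar (whenever both are defined).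
   Context: $\Sigma_{LL},\Sigma_{LR},\Sigma_{RR}$ denote submatrices of $\Sigma$ indexed by the given index sets and $\mu_L,\mu_R$ the corresponding subvectors of $\mu$. This is the node-level step (with $L^1$ normalisation) of the HRP-$\Sigma\mu$ allocator. *)

From HB Require Import structures.
From mathcomp Require Import all_boot all_order all_algebra.
Set Implicit Arguments. Unset Strict Implicit. Unset Printing Implicit Defensive.
Import Order.TTheory GRing.Theory Num.Theory.
Local Open Scope ring_scope.

Section HRP.
Variables (R : realFieldType) (N : nat).

(* Index sets are subsets A of 'I_N; elements of A are enumerated by
   enum_val : 'I_#|A| -> 'I_N, so R^{|A|} is 'cV[R]_#|A|. *)

Definition subM (A B : {set 'I_N}) (S : 'M[R]_N) : 'M[R]_(#|A|, #|B|) :=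
  \matrix_(i, j) S (enum_val i) (enum_val j).

Definition subV (A : {set 'I_N}) (mu : 'cV[R]_N) : 'cV[R]_#|A| :=
  \col_i mu (enum_val i) 0.

Definition embed (A : {set 'I_N}) : 'M[R]_(N, #|A|) :=
  \matrix_(i, j) (i == enum_val j)%:R.

Definition posdef (S : 'M[R]_N) : Prop :=
  S^T = S /\ forall x : 'cV[R]_N, x != 0 -> 0 < (x^T *m S *m x) 0 0.

Variables (S : 'M[R]_N) (mu : 'cV[R]_N) (gamma : R) (L Rs : {set 'I_N}).

Definition vL (wL : 'cV[R]_#|L|) := (wL^T *m subM L L S *m wL) 0 0.
Definition sL (wL : 'cV[R]_#|L|) := (wL^T *m subV L mu) 0 0.
Definition vR (wR : 'cV[R]_#|Rs|) := (wR^T *m subM Rs Rs S *m wR) 0 0.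
Definition sR (wR : 'cV[R]_#|Rs|) := (wR^T *m subV Rs mu) 0 0.
Definition cLR (wL : 'cV[R]_#|L|) (wR : 'cV[R]_#|Rs|) :=
  (wL^T *m subM L Rs S *m wR) 0 0.

Definition denom wL wR := vL wL * vR wR - gamma ^+ 2 * cLR wL wR ^+ 2.

Definition alphaL_raw wL wR :=
  (vR wR * sL wL - gamma * cLR wL wR * sR wR) / denom wL wR.
Definition alphaR_raw wL wR :=
  (vL wL * sR wR - gamma * cLR wL wR * sL wL) / denom wL wR.

Definition norm_const wL wR := `|alphaL_raw wL wR| + `|alphaR_raw wL wR|.

Definition alphaL wL wR := alphaL_raw wL wR / norm_const wL wR.
Definition alphaR wL wR := alphaR_raw wL wR / norm_const wL wR.

Definition node_defined wL wR : Prop :=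
  denom wL wR != 0 /\ norm_const wL wR != 0.

(* Combined node portfolio (alpha_L wL, alpha_R wR) in R^{L u R},
   embedded into R^N with zeros outside L u R. *)
Definition node_portfolio wL wR : 'cV[R]_N :=
  alphaL wL wR *: (embed L *m wL) + alphaR wL wR *: (embed Rs *m wR).

End HRP.

From HB Require Import structures.
From mathcomp Require Import all_boot all_order all_algebra.
From mathcomp Require Import ring.
Import Order.TTheory GRing.Theory Num.Theory.
Local Open Scope ring_scope.

(* Every quantity of the node step is homogeneous in [wL]: replacing [wL] by
   [k wL] multiplies [vL] by [k^2], [sL] and [c] by [k], the denominator by
   [k^2], hence divides [alphaL_raw] by [k] and leaves [alphaR_raw] unchanged.
   So [alphaL * wL] and [alphaR * wR] are both rescaled by the ratio of the
   two (positive) L^1 normalisation constants. *)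

Lemma trmx_scale_mulmx (R : comPzRingType) (m n : nat) (a : R)
    (u : 'cV[R]_m) (M : 'M[R]_(m, n)) :
  (a *: u)^T *m M = a *: (u^T *m M).
Proof. by rewrite linearZ /= -scalemxAl. Qed.

Lemma form_scalel (R : comPzRingType) (m n : nat) (a : R)
    (u : 'cV[R]_m) (M : 'M[R]_(m, n)) (v : 'cV[R]_n) :
  ((a *: u)^T *m M *m v) 0 0 = a * (u^T *m M *m v) 0 0.
Proof. by rewrite trmx_scale_mulmx -scalemxAl mxE. Qed.

Section ScaleLeftRepresentative.
Variables (R : realFieldType) (N : nat) (S : 'M[R]_N) (mu : 'cV[R]_N).
Variables (gamma : R) (L Rs : {set 'I_N}).
Variables (wL : 'cV[R]_#|L|) (wR : 'cV[R]_#|Rs|) (k : R).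
Hypothesis k_neq0 : k != 0.
Hypothesis denom_neq0 : denom S gamma wL wR != 0.

Lemma vL_scale : vL S (k *: wL) = k ^+ 2 * vL S wL.
Proof. by rewrite /vL [LHS]form_scalel -scalemxAr mxE mulrA expr2. Qed.

Lemma sL_scale : sL mu (k *: wL) = k * sL mu wL.
Proof. by rewrite /sL trmx_scale_mulmx mxE. Qed.

Lemma cLR_scale : cLR S (k *: wL) wR = k * cLR S wL wR.
Proof. exact: form_scalel. Qed.

Lemma denom_scale : denom S gamma (k *: wL) wR = k ^+ 2 * denom S gamma wL wR.
Proof. by rewrite /denom vL_scale cLR_scale; ring. Qed.

Lemma alphaL_raw_scale :
  alphaL_raw S mu gamma (k *: wL) wR = alphaL_raw S mu gamma wL wR / k.
Proof.
by rewrite /alphaL_raw denom_scale sL_scale cLR_scale; field; rewrite denom_neq0 k_neq0.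
Qed.

Lemma alphaR_raw_scale :
  alphaR_raw S mu gamma (k *: wL) wR = alphaR_raw S mu gamma wL wR.
Proof.
rewrite /alphaR_raw denom_scale vL_scale sL_scale cLR_scale.
by field; rewrite denom_neq0 k_neq0.
Qed.

Lemma node_portfolio_scale :
  norm_const S mu gamma wL wR != 0 ->
  norm_const S mu gamma (k *: wL) wR != 0 ->
  node_portfolio S mu gamma (k *: wL) wR =
  (norm_const S mu gamma wL wR / norm_const S mu gamma (k *: wL) wR)
    *: node_portfolio S mu gamma wL wR.
Proof.
rewrite /node_portfolio /alphaL /alphaR alphaL_raw_scale alphaR_raw_scale.
move=> n_neq0 n'_neq0; rewrite -scalemxAr scalerDr !scalerA.
by congr (_ *: _ + _ *: _); field; rewrite ?k_neq0 n_neq0 n'_neq0.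
Qed.

End ScaleLeftRepresentative.

Lemma norm_const_gt0 (R : realFieldType) (N : nat) (S : 'M[R]_N)
    (mu : 'cV[R]_N) (gamma : R) (L Rs : {set 'I_N})
    (wL : 'cV[R]_#|L|) (wR : 'cV[R]_#|Rs|) :
  norm_const S mu gamma wL wR != 0 -> 0 < norm_const S mu gamma wL wR.
Proof. by move=> n_neq0; rewrite lt0r n_neq0 addr_ge0. Qed.

Theorem mainTheorem12 (R : realFieldType) (N : nat) (S : 'M[R]_N)
    (mu : 'cV[R]_N) (gamma : R) (L Rs : {set 'I_N})
    (wL : 'cV[R]_#|L|) (wR : 'cV[R]_#|Rs|) (k : R) :
  posdef S ->
  0 <= gamma -> gamma <= 1 ->
  [disjoint L & Rs] -> L != set0 -> Rs != set0 ->
  0 < k ->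
  node_defined S mu gamma wL wR ->
  node_defined S mu gamma (k *: wL) wR ->
  exists2 t : R, 0 < t &
    node_portfolio S mu gamma (k *: wL) wR = t *: node_portfolio S mu gamma wL wR.
Proof.
move=> _ _ _ _ _ _ k_gt0 [D_neq0 n_neq0] [_ n'_neq0].
exists (norm_const S mu gamma wL wR / norm_const S mu gamma (k *: wL) wR).
  by apply: divr_gt0; apply: norm_const_gt0.
by rewrite node_portfolio_scale // gt_eqF.
Qed.
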